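(* Let $S=\langle S^G,S^\Delta\rangle$ be a triplestore schema and $r:A\rightarrow C$ a rule (as defined in the context). Then $\mathtt{score}(S,r)$ is a basic schema consequence of $S$ by $r$, i.e. $$\mathbb{I}(\mathtt{score}(S,r))=\bigcup_{I\in\mathbb{I}(S)}\{I' \mid I'\subseteq r(I)\}.$$
   Context: **RDF basics.** $\mathbb{U}$ (URIs), $\mathbb{L}$ (literals) and $\mathbb{V}$ (variables) are pairwise disjoint infinite sets; constants are elements of $\mathbb{U}\cup\mathbb{L}$. - A triple is an element of $\mathbb{U}\times\mathbb{U}\times(\mathbb{U}\cup\mathbb{L})$, and a graph is a finite set of triples. - A triple pattern is an element of $(\mathbb{U}\cup\mathbb{V})\times(\mathbb{U}\cup\mathbb{V})\times(\mathbb{U}\cup\mathbb{L}\cup\mathbb{V})$, and a graph pattern is a finite set of triple patterns. For a triple (pattern) $t$ and $i\in\tau=\{1,2,3\}$, $t[i]$ is its $i$-th element (subject, predicate, object). $vars(P)$ and $const(P)$ denote the variables and constants occurring in $P$. - A mapping is a partial function $m:\mathbb{V}\rightharpoonup\mathbb{U}\cup\mathbb{L}$ with domain $dom(m)$. For a pattern $p$, $m(p)$ replaces each $?v\in dom(m)$ by $m(?v)$ and leaves other variables unchanged. - For a graph pattern $P$ and graph $G$, $[\![P]\!]_G$ is the set of mappings $m$ with $dom(m)=vars(P)$ and $m(P)\subseteq G$. **Rules.** A rule $r:A\rightarrow C$ consists of graph patterns $A$ (antecedent) and $C$ (consequent) with $vars(C)\subseteq vars(A)$, where each variable occurs at most once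 in $C$. Its application to a graph $I$ is $$r(I)=I\cup\bigcup_{m\in[\![A]\!]_I}\{m(C) \text{ if } m(C) \text{ is a graph (i.e. no literal in subject/predicate position)}\}.$$ **Schemas.** A triplestore schema is a pair $S=\langle S^G,S^\Delta\rangle$ where: - $S^G$ is a finite set of triple patterns in which each variable occurs at most once (across and within triples); - $S^\Delta\subseteq vars(S^G)$ (the no-literal set) contains every variable occurring in subject or predicate position in $S^G$. A triple pattern $t^S$ models a triple $t$ (w.r.t. $S^\Delta$) if there is a mapping $\mu$ with $\mu(t^S)=t$ that binds no variable of $S^\Delta$ to a literal. The same definition is used when $t$ contains the special URI $\lambda$ below. A graph $I$ is an instance of $S$ if every triple of $I$ is modelled by some $t^S\in S^G$. $\mathbb{I}(S)$ denotes the set of instances of $S$. **Sandbox graph and rewriting.** Fix a fresh URI $\lambda$ not occurring in $S^G$, $A$ or $C$. - The sandbox graph $\mathbb{S}(S)$ consists of, for each $t^S\in S^G$, the triple obtained by replacing every variable in $t^S$ by $\lambda$. - For a triple pattern $t$, its rewritings are the (up to 8) triple patterns $t'$ with $t'[i]\in\{t[i],\lambda\}$ for each $i$. $\mathbb{Q}(A)$ is the set of graph patterns obtained by choosing one rewriting of each $t\in A$. - $[\![\mathbb{Q}(A)]\!]_{\mathbb{S}(S)}$ is the set of mappings $m$ with $dom(m)=vars(A)$ such that $m(q)\subseteq\mathbb{S}(S)$ for some $q\in\mathbb{Q}(A)$. **Definition of $\mathtt{score}(S,r)$.** Initialise $S'^G=S^G$ and $S'^\Delta=S^\Delta$. Then,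 for each $m\in[\![\mathbb{Q}(A)]\!]_{\mathbb{S}(S)}$: 1. Let $\Delta^m$ be the set of variables occurring in subject or predicate position in some triple of $A$ or $C$. 2. For each $t_A\in A$, let $T(t_A)$ be the set of $t^S\in S^G$ that model $m(t_q)$ for some rewriting $t_q$ of $t_A$ with $m(t_q)\in\mathbb{S}(S)$. - (a) If $t_A[3]$ is a literal $l$, or a variable with $m(t_A[3])=l\in\mathbb{L}$, and no $t^S\in T(t_A)$ has $t^S[3]=l$ or $t^S[3]\in vars(S^G)\setminus S^\Delta$, then discard $m$. - (b) If $t_A[3]$ is a variable with $m(t_A[3])=\lambda$ and no $t^S\in T(t_A)$ has $t^S[3]\in vars(S^G)\setminus S^\Delta$, then add $t_A[3]$ to $\Delta^m$. 3. Discard $m$ if it binds some variable of $\Delta^m$ to a literal. 4. If $m$ is not discarded, let $s^m$ be the substitution that maps each $?v$ with $m(?v)\neq\lambda$ to $m(?v)$, and each $?v$ with $m(?v)=\lambda$ to a fresh variable $?v^*$ (new for each $m$ and not used elsewhere). Add $s^m(C)$ to $S'^G$, and add $s^m(\Delta^m)\cap vars(S'^G)$ to $S'^\Delta$. $\mathtt{score}(S,r)$ is the resulting schema $\langle S'^G,S'^\Delta\rangle$. *)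

From HB Require Import structures.
From mathcomp Require Import all_boot.
From Stdlib Require Import ClassicalEpsilon.
Set Implicit Arguments. Unset Strict Implicit. Unset Printing Implicit Defensive.

(* ---------- RDF terms: U (URIs), L (literals), V (variables), pairwise
   disjoint and infinite (each indexed by nat). ---------- *)
Inductive term := TU of nat | TL of nat | TV of nat.

Definition term_eqb (x y : term) : bool :=
  match x, y with
  | TU a, TU b => a == b
  | TL a, TL b => a == b
  | TV a, TV b => a == b
  | _, _ => false
  end.

Lemma term_eqP : Equality.axiom term_eqb.
Proof.
by case=> a [] b /=; try (by constructor); apply: (iffP eqP) => [->|[]].
Qed.

HB.instance Definition _ := hasDecEq.Build term term_eqP.

Definition is_uri (x : term) : bool := if x is TU _ then true else false.
Definition is_lit (x : term) : bool := if x is TL _ then true else false.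
Definition is_var (x : term) : bool := if x is TV _ then true else false.
Definition is_const (x : term) : bool := ~~ is_var x.
Definition tvar (x : term) : seq nat := if x is TV v then [:: v] else [::].

Definition tp := (term * term * term)%type.
Definition tsub (t : tp) : term := t.1.1.
Definition tpred (t : tp) : term := t.1.2.
Definition tobj (t : tp) : term := t.2.
Definition tterms (t : tp) : seq term := [:: tsub t; tpred t; tobj t].

(* triple: U x U x (U ∪ L);  graph: finite set (list) of triples *)
Definition is_triple (t : tp) : bool :=
  [&& is_uri (tsub t), is_uri (tpred t) & is_const (tobj t)].
Definition is_graph (G : seq tp) : bool := all is_triple G.
Definition is_tpattern (t : tp) : bool := ~~ is_lit (tsub t) && ~~ is_lit (tpred t).
Definition is_gpattern (P : seq tp) : bool := all is_tpattern P.

Definition var_occ (P : seq tp) : seq nat :=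
  flatten [seq flatten (map tvar (tterms t)) | t <- P].
Definition vars (P : seq tp) : seq nat := undup (var_occ P).
Definition sp_vars (P : seq tp) : seq nat :=
  undup (flatten [seq tvar (tsub t) ++ tvar (tpred t) | t <- P]).
Definition consts (P : seq tp) : seq term :=
  undup [seq x <- flatten (map tterms P) | is_const x].

Definition mapping := nat -> option term.
Definition is_mapping (m : mapping) : Prop :=
  forall v c, m v = Some c -> is_const c.
Definition app (m : mapping) (x : term) : term :=
  if x is TV v then odflt x (m v) else x.
Definition app3 (m : mapping) (t : tp) : tp :=
  (app m (tsub t), app m (tpred t), app m (tobj t)).
Definition appP (m : mapping) (P : seq tp) : seq tp := map (app3 m) P.

Definition sol (P G : seq tp) (m : mapping) : Prop :=
  is_mapping m /\ (forall v, isSome (m v) = (v \in vars P)) /\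
  {subset appP m P <= G}.

Definition is_rule (A C : seq tp) : Prop :=
  is_gpattern A /\ is_gpattern C /\ {subset vars C <= vars A} /\ uniq (var_occ C).

Definition in_rule_app (A C I : seq tp) (t : tp) : Prop :=
  t \in I \/ exists m, sol A I m /\ is_graph (appP m C) /\ t \in appP m C.

Definition schema := (seq tp * seq nat)%type.  (* ⟨S^G, S^Δ⟩ *)
Definition is_schema (S : schema) : Prop :=
  is_gpattern S.1 /\ uniq (var_occ S.1) /\
  {subset S.2 <= vars S.1} /\ {subset sp_vars S.1 <= S.2}.

Definition models (SD : seq nat) (tS t : tp) : Prop :=
  exists mu : mapping, is_mapping mu /\ app3 mu tS = t /\
    (forall v c, v \in SD -> mu v = Some c -> ~~ is_lit c).

Definition instance (S : schema) (I : seq tp) : Prop :=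
  is_graph I /\ forall t, t \in I -> exists2 tS, tS \in S.1 & models S.2 tS t.

Definition decP (P : Prop) : bool :=
  if excluded_middle_informative P then true else false.

Definition lamsub (lam : nat) (x : term) : term := if is_var x then TU lam else x.
Definition sandbox (lam : nat) (SG : seq tp) : seq tp :=
  [seq (lamsub lam (tsub t), lamsub lam (tpred t), lamsub lam (tobj t)) | t <- SG].
Definition rewritings (lam : nat) (t : tp) : seq tp :=
  flatten [seq [seq (ab, c) | ab <- [seq (a, b) | a <- [:: tsub t; TU lam],
                                                   b <- [:: tpred t; TU lam]]]
          | c <- [:: tobj t; TU lam]].
Fixpoint QA (lam : nat) (P : seq tp) : seq (seq tp) :=
  if P is t :: P' then [seq r :: q | r <- rewritings lam t, q <- QA lam P']
  else [:: [::]].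

Fixpoint allseqs (n : nat) (xs : seq term) : seq (seq term) :=
  if n is n'.+1 then [seq x :: s | x <- xs, s <- allseqs n' xs] else [:: [::]].
Definition assign (vs : seq nat) (vals : seq term) : mapping :=
  fun v => if v \in vs then Some (nth (TU 0) vals (index v vs)) else None.
Definition candidates (lam : nat) (SG A : seq tp) : seq mapping :=
  [seq assign (vars A) vals
  | vals <- allseqs (size (vars A)) (consts (sandbox lam SG))].
Definition in_QA_sol (lam : nat) (SG A : seq tp) (m : mapping) : bool :=
  has (fun q => all (fun t => app3 m t \in sandbox lam SG) q) (QA lam A).
Definition QA_sols (lam : nat) (SG A : seq tp) : seq mapping :=
  [seq m <- candidates lam SG A | in_QA_sol lam SG A m].

Definition Tset (lam : nat) (SG : seq tp) (SD : seq nat) (m : mapping) (tA : tp)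
  : seq tp :=
  [seq tS <- SG | has (fun tq => (app3 m tq \in sandbox lam SG) &&
                                 decP (models SD tS (app3 m tq)))
                      (rewritings lam tA)].
Definition nonDelta_var (SD : seq nat) (x : term) : bool :=
  if x is TV v then v \notin SD else false.

Definition discard_a lam SG SD (m : mapping) (tA : tp) : bool :=
  let l := app m (tobj tA) in
  is_lit l && ~~ has (fun tS => (tobj tS == l) || nonDelta_var SD (tobj tS))
                     (Tset lam SG SD m tA).
Definition delta_b lam SG SD (m : mapping) (tA : tp) : seq nat :=
  if tobj tA is TV v then
    if (m v == Some (TU lam)) &&
       ~~ has (fun tS => nonDelta_var SD (tobj tS)) (Tset lam SG SD m tA)
    then [:: v] else [::]
  else [::].
Definition DeltaM lam SG SD (A C : seq tp) (m : mapping) : seq nat :=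
  sp_vars A ++ sp_vars C ++ flatten [seq delta_b lam SG SD m tA | tA <- A].
Definition discarded lam SG SD (A C : seq tp) (m : mapping) : bool :=
  has (discard_a lam SG SD m) A ||
  has (fun v => if m v is Some (TL _) then true else false) (DeltaM lam SG SD A C m).
(* s^m, for the k-th mapping: fresh variable ?v* is TV (fr k v) *)
Definition subst_m (lam : nat) (fr : nat -> nat -> nat) (k : nat) (m : mapping)
  : mapping :=
  fun v => if m v == Some (TU lam) then Some (TV (fr k v)) else m v.

Definition score_step lam fr SG SD (A C : seq tp)
  (st : seq tp * seq nat) (km : nat * mapping) : seq tp * seq nat :=
  let: (k, m) := km in
  if discarded lam SG SD A C m then st else
  let s := subst_m lam fr k m in
  let G' := st.1 ++ appP s C in
  (G', st.2 ++ [seq v <- flatten [seq tvar (app s (TV v)) | v <- DeltaM lam SG SD A C m]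
               | v \in vars G']).

Definition score (lam : nat) (fr : nat -> nat -> nat) (S : schema) (A C : seq tp)
  : schema :=
  let ms := QA_sols lam S.1 A in
  foldl (score_step lam fr S.1 S.2 A C) (S.1, S.2) (zip (iota 0 (size ms)) ms).

From Pilot Require Import Defs.
From HB Require Import structures.
From mathcomp Require Import all_boot.
From Stdlib Require Import ClassicalEpsilon.
Set Implicit Arguments. Unset Strict Implicit. Unset Printing Implicit Defensive.

(* Every triple pattern of score(S, r) is either a pattern of S^G or a pattern
   s^m(c) added for a surviving mapping m of [[Q(A)]]_{S(S)} and c in C.

   A triple t modelled by s^m(c) through some mu is obtained by
     "concretising" m: each variable sent to the sandbox URI lambda is given the
     value that mu assigns to its fresh copy ?v*.  The concretised mapping m'
     sends every t_A in A to a triple modelled by some pattern of S^G (this is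
     where the discard conditions 2(a) and 3 are used), so I = m'(A) is an
     instance of S and t = m'(c) lies in r(I).
   - Completeness.  Given an instance I and a match m0 of A in I, pick for each
     t_A a pattern of S^G modelling m0(t_A); abstracting m0 to lambda at the
     positions where that pattern has a variable yields a mapping m of
     [[Q(A)]]_{S(S)} which is not discarded, and m0(c) is modelled by s^m(c). *)

Lemma mem_tvar w x : (w \in tvar x) = (x == TV w).
Proof. by case: x => //= n; rewrite inE eq_sym. Qed.

Lemma mem_vars w P : (w \in vars P) = has (fun t => TV w \in tterms t) P.
Proof.
rewrite mem_undup; elim: P => //= t P IH.
by rewrite mem_cat IH /= !mem_cat !mem_tvar !inE !(eq_sym (TV w)) orbF orbA.
Qed.

Lemma mem_varsP w P :
  reflect (exists2 t, t \in P & TV w \in tterms t) (w \in vars P).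
Proof. rewrite mem_vars; exact: hasP. Qed.

Lemma vars_cat w P Q : (w \in vars (P ++ Q)) = (w \in vars P) || (w \in vars Q).
Proof. by rewrite !mem_vars has_cat. Qed.

Lemma tterms_vars P t v : t \in P -> TV v \in tterms t -> v \in vars P.
Proof. by move=> tP vt; apply/mem_varsP; exists t. Qed.

Lemma mem_sp_vars w P :
  (w \in sp_vars P) = has (fun t => (tsub t == TV w) || (tpred t == TV w)) P.
Proof.
rewrite mem_undup; elim: P => //= t P IH.
by rewrite mem_cat IH mem_cat !mem_tvar.
Qed.

Lemma sp_vars_vars w P : w \in sp_vars P -> w \in vars P.
Proof.
rewrite mem_sp_vars => /hasP [t tP H]; apply: (tterms_vars tP).
by rewrite !inE; case/orP: H => /eqP ->; rewrite eqxx ?orbT.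
Qed.

Lemma uniq_vars_in (P : seq tp) t : uniq (var_occ P) -> t \in P ->
  uniq (flatten (map tvar (tterms t))).
Proof.
rewrite /var_occ; elim: P => //= t' P IH; rewrite cat_uniq => /and3P [u _ us].
by rewrite inE => /orP [/eqP -> // | /(IH us)].
Qed.

Lemma in_tterms_sub t : tsub t \in tterms t.
Proof. by rewrite inE eqxx. Qed.
Lemma in_tterms_pred t : tpred t \in tterms t.
Proof. by rewrite !inE eqxx orbT. Qed.
Lemma in_tterms_obj t : tobj t \in tterms t.
Proof. by rewrite !inE eqxx !orbT. Qed.

Lemma tterms_app3 (s : mapping) c x : x \in tterms c -> app s x \in tterms (app3 s c).
Proof. by rewrite !inE => /or3P [] /eqP ->; rewrite eqxx ?orbT. Qed.

Lemma uri_const x : is_uri x -> is_const x.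
Proof. by case: x. Qed.

Lemma app_const (m : mapping) x : ~~ is_var x -> app m x = x.
Proof. by case: x. Qed.

Lemma fresh_in lam P t : TU lam \notin flatten (map tterms P) -> t \in P ->
  TU lam \notin tterms t.
Proof. by move=> F tP; apply: contra F => L; apply/flatten_mapP; exists t. Qed.

Lemma notin_tterms x t : x \notin tterms t ->
  [/\ tsub t != x, tpred t != x & tobj t != x].
Proof. by rewrite !inE !negb_or => /and3P [*]; split; rewrite eq_sym. Qed.

Lemma decPP (Q : Prop) : reflect Q (Defs.decP Q).
Proof. by rewrite /Defs.decP; case: excluded_middle_informative => q; constructor. Qed.

Definition alt lam (x y : term) := (y == x) || (y == TU lam).

Lemma rewritingsP lam t tq : tq \in rewritings lam t ->
  [/\ alt lam (tsub t) (tsub tq), alt lam (tpred t) (tpred tq)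
    & alt lam (tobj t) (tobj tq)].
Proof.
case: tq => [[a b] c]; rewrite /rewritings /= !inE /alt /tsub /tpred /tobj /=.
by case/or4P => [||| /or4P [||| /orP[]//]] /eqP [-> -> ->]; rewrite !eqxx ?orbT.
Qed.

Lemma rewritings_intro lam t a b c :
  alt lam (tsub t) a -> alt lam (tpred t) b -> alt lam (tobj t) c ->
  (a, b, c) \in rewritings lam t.
Proof.
rewrite /rewritings /alt /= !inE.
by do 3 case/orP => /eqP ->; rewrite eqxx ?orbT.
Qed.

Lemma QA_mem lam A q : q \in QA lam A ->
  forall tA, tA \in A -> exists2 tq, tq \in q & tq \in rewritings lam tA.
Proof.
elim: A q => [|t A IH] q; first by [].
case/allpairsPdep => [r [q' [rR qQ ->]]] tA.
rewrite inE => /orP [/eqP -> | tAA]; first by exists r => //; exact: mem_head.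
by have [tq tqq tqr] := IH _ qQ _ tAA; exists tq => //; rewrite inE tqq orbT.
Qed.

Lemma QA_intro lam A (f : tp -> tp) :
  (forall tA, tA \in A -> f tA \in rewritings lam tA) -> map f A \in QA lam A.
Proof.
elim: A => [_|t A IH H]; first by rewrite inE.
rewrite map_cons; apply: allpairs_f_dep; first by apply: H; rewrite inE eqxx.
by apply: IH => tA tAA; apply: H; rewrite inE tAA orbT.
Qed.

Lemma allseqsP n xs s : s \in allseqs n xs -> size s = n /\ all (mem xs) s.
Proof.
elim: n s => /= [|n IH] s; first by rewrite inE => /eqP ->.
case/allpairsPdep => [x [s' [xX sS ->]]].
by have [<- H] := IH _ sS; rewrite /= xX H.
Qed.

Lemma allseqs_intro n xs s : size s = n -> all (mem xs) s -> s \in allseqs n xs.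
Proof.
elim: n s => [|n IH] [|x s] //= [sz] /andP [xX sX].
by apply: allpairs_f_dep => //; exact: IH.
Qed.

Definition pos_ok (SD : seq nat) (x y : term) : bool :=
  if x is TV w then is_const y && ((w \in SD) ==> ~~ is_lit y) else x == y.

Definition mu3 (tS t : tp) : mapping := fun w =>
  if tsub tS == TV w then Some (tsub t)
  else if tpred tS == TV w then Some (tpred t)
  else if tobj tS == TV w then Some (tobj t) else None.

Lemma uniq3 a b c n : uniq (tvar a ++ tvar b ++ tvar c ++ [::]) ->
  [/\ (a == TV n) && (b == TV n) = false, (a == TV n) && (c == TV n) = false
    & (b == TV n) && (c == TV n) = false].
Proof.
rewrite !cat_uniq !has_cat !negb_or => /and5P [_ /andP [ab ac] _ bc _].
split; apply/negbTE/andP => -[/eqP Ex /eqP Ey];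
  [move: ab | move: ac | move: bc]; by rewrite Ex Ey /= ?orbF ?inE ?eqxx.
Qed.

Lemma models_pos SD tS t : uniq (flatten (map tvar (tterms tS))) ->
  pos_ok SD (tsub tS) (tsub t) -> pos_ok SD (tpred tS) (tpred t) ->
  pos_ok SD (tobj tS) (tobj t) -> models SD tS t.
Proof.
case: tS => [[a b] c]; case: t => [[x y] z]; rewrite /tsub /tpred /tobj /=.
move=> U Ha Hb Hc; have U3 n := @uniq3 a b c n U.
exists (mu3 (a, b, c) (x, y, z)); split; [|split].
- move=> w d; rewrite /mu3 /tsub /tpred /tobj /=.
  case: ifP => [/eqP E [<-]|_]; first by move: Ha; rewrite E => /andP[].
  case: ifP => [/eqP E [<-]|_]; first by move: Hb; rewrite E => /andP[].
  case: ifP => [/eqP E [<-]|_ //]; by move: Hc; rewrite E => /andP[].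
- rewrite /app3 /tsub /tpred /tobj /= /mu3 /tsub /tpred /tobj /=.
  congr (_, _, _).
  + by case: a Ha {U U3} => [n|n|n] /= => [/eqP|/eqP|_]; rewrite ?eqxx.
  + case: b Hb U3 {U} => [n|n|n] /= => [/eqP //|/eqP //|_] U3.
    by have [+ _ _] := U3 n; rewrite eqxx andbT => ->.
  + case: c Hc U3 {U} => [n|n|n] /= => [/eqP //|/eqP //|_] U3.
    by have [_ + +] := U3 n; rewrite eqxx !andbT => -> ->.
- move=> w d wD; rewrite /mu3 /tsub /tpred /tobj /=.
  case: ifP => [/eqP E [<-]|_]; first by move: Ha; rewrite E /= wD => /andP[].
  case: ifP => [/eqP E [<-]|_]; first by move: Hb; rewrite E /= wD => /andP[].
  case: ifP => [/eqP E [<-]|_ //]; by move: Hc; rewrite E /= wD => /andP[].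
Qed.

Definition pos_inv (SD : seq nat) (x y : term) : Prop :=
  (~~ is_var x -> x = y) /\ (forall w, x = TV w -> w \in SD -> ~~ is_lit y).

Lemma models_inv SD tS t : models SD tS t ->
  [/\ pos_inv SD (tsub tS) (tsub t), pos_inv SD (tpred tS) (tpred t) &
      pos_inv SD (tobj tS) (tobj t)].
Proof.
have inv x mu : (forall v c, v \in SD -> mu v = Some c -> ~~ is_lit c) ->
    pos_inv SD x (app mu x).
  move=> H; split; first by move=> /app_const ->.
  by move=> w -> wD /=; case E: (mu w) => [d|] //=; exact: H E.
by move=> [mu [_ [<- H]]]; split; apply: inv.
Qed.

Lemma models_restrict SD SD' tS t :
  models SD tS t ->
  (forall w, w \in SD' -> TV w \in tterms tS -> w \in SD) ->
  models SD' tS t.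
Proof.
move=> [mu [muM [Et muD]]] H.
exists (fun w => if TV w \in tterms tS then mu w else None); split; [|split].
- by move=> v c; case: ifP => // _; apply: muM.
- rewrite -Et /app3; have E x : x \in tterms tS ->
      app (fun w => if TV w \in tterms tS then mu w else None) x = app mu x.
    by case: x => //= n ->.
  by rewrite !E ?in_tterms_sub ?in_tterms_pred ?in_tterms_obj.
- by move=> v c vD; case: ifP => // vT; apply: muD; exact: H.
Qed.

Definition lamsub3 lam (t : tp) : tp :=
  (lamsub lam (tsub t), lamsub lam (tpred t), lamsub lam (tobj t)).

Lemma sandboxE lam SG : sandbox lam SG = map (lamsub3 lam) SG.
Proof. by []. Qed.

Lemma models_lamsub lam SD tS : uniq (flatten (map tvar (tterms tS))) ->
  models SD tS (lamsub3 lam tS).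
Proof.
move=> U; apply: models_pos => //; case: tS {U} => [[a b] c];
  rewrite /lamsub3 /tsub /tpred /tobj /=.
- by case: a => //= n; rewrite ?eqxx ?implybT.
- by case: b => //= n; rewrite ?eqxx ?implybT.
- by case: c => //= n; rewrite ?eqxx ?implybT.
Qed.

Lemma mem_consts x P : (x \in consts P) = is_const x && (x \in flatten (map tterms P)).
Proof. by rewrite mem_undup mem_filter. Qed.

(* Mappings form no eqType, so lists of them are handled with List.In. *)
Lemma In_mem (T : eqType) (s : seq T) x : List.In x s <-> x \in s.
Proof.
elim: s => //= y s IH; rewrite in_cons; split.
- by case=> [->|/IH ->]; rewrite ?eqxx ?orbT.
- by case/orP => [/eqP ->|/IH]; auto.
Qed.

Lemma In_map (T U : Type) (f : T -> U) (s : seq T) y :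
  List.In y (map f s) <-> exists x, List.In x s /\ y = f x.
Proof.
elim: s => [|x s IH] /=; first by split => // [[x []]].
rewrite IH; split => [[<-|[z [zs ->]]]|[z [[<-|zs] ->]]]; eauto.
Qed.

Lemma In_filter (T : Type) (p : pred T) (s : seq T) y :
  List.In y (filter p s) <-> List.In y s /\ p y.
Proof.
elim: s => [|x s IH] /=; first by split => // [[]].
case: ifP => px /=; rewrite IH.
- by split => [[<-|[ys py]]|[[<-|ys] py]]; auto.
- by split => [[ys py]|[[<-|ys] py]]; [split; auto | rewrite px in py |].
Qed.

Section IndexedList.
Variable T : Type.

Lemma zip_iota_key (xs : seq T) s k x :
  List.In (k, x) (zip (iota s (size xs)) xs) -> s <= k.
Proof.
elim: xs s => [|y xs IH] s //= [[<- _] //|H].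
by apply: ltnW; apply: IH H.
Qed.

Lemma zip_iota_inj (xs : seq T) s k x1 x2 :
  List.In (k, x1) (zip (iota s (size xs)) xs) ->
  List.In (k, x2) (zip (iota s (size xs)) xs) -> x1 = x2.
Proof.
elim: xs s => [|y xs IH] s //= [[E1 <-]|H1] [[E2 <-]|H2] //.
- by move: (zip_iota_key H2); rewrite -E1 ltnn.
- by move: (zip_iota_key H1); rewrite -E2 ltnn.
- exact: IH H1 H2.
Qed.

Lemma zip_iota_in (xs : seq T) s k x :
  List.In (k, x) (zip (iota s (size xs)) xs) -> List.In x xs.
Proof.
elim: xs s => [|y xs IH] s //= [[_ <-]|H]; [by left | right; exact: IH H].
Qed.

Lemma zip_iota_ex (xs : seq T) s x :
  List.In x xs -> exists k, List.In (k, x) (zip (iota s (size xs)) xs).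
Proof.
elim: xs s => [|y xs IH] s //= [<-|H]; first by exists s; left.
by have [k Hk] := IH s.+1 H; exists k; right.
Qed.

End IndexedList.

Section ScoreFold.
Variables (lam : nat) (fr : nat -> nat -> nat) (SG : seq tp) (SD : seq nat).
Variables (A C : seq tp).

Local Notation step := (score_step lam fr SG SD A C).
Local Notation discarded := (discarded lam SG SD A C).
Local Notation DeltaM := (DeltaM lam SG SD A C).

Lemma fold_patterns (l : seq (nat * mapping)) st t :
  t \in (foldl step st l).1 <->
  t \in st.1 \/ exists k m, [/\ List.In (k, m) l, ~~ discarded m &
                               t \in Defs.appP (subst_m lam fr k m) C].
Proof.
elim: l st => [|[k m] l IH] st /=.
  by split => [->|[//|[k [m [[]]]]]]; left.
rewrite IH /score_step; case: ifP => D /=.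
  split => [[|[k' [m' [H1 H2 H3]]]]|[|[k' [m' [[[<- <-]|H1] H2 H3]]]]]; auto.
  - by right; exists k', m'; split => //; right.
  - by rewrite D in H2.
  - by right; exists k', m'.
rewrite mem_cat; split.
- case=> [/orP [->|H]|[k' [m' [H1 H2 H3]]]]; first by left.
    by right; exists k, m; split => //; [left | rewrite D].
  by right; exists k', m'; split => //; right.
- case=> [->|[k' [m' [[[<- <-]|H1] H2 H3]]]]; first by left.
    by left; rewrite H3 orbT.
  by right; exists k', m'.
Qed.

Lemma fold_delta_mono (l : seq (nat * mapping)) st w :
  w \in st.2 -> w \in (foldl step st l).2.
Proof.
elim: l st => [|[k m] l IH] st //= H; apply: IH.
by rewrite /score_step; case: ifP => //= _; rewrite mem_cat H.
Qed.

Lemma fold_delta_in (l : seq (nat * mapping)) st k m u w :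
  List.In (k, m) l -> ~~ discarded m -> u \in DeltaM m ->
  w \in tvar (app (subst_m lam fr k m) (TV u)) ->
  w \in vars (Defs.appP (subst_m lam fr k m) C) ->
  w \in (foldl step st l).2.
Proof.
elim: l st => [|[k' m'] l IH] st //= [[-> ->]|H] ND uD wt wv; last exact: IH.
apply: fold_delta_mono; rewrite /score_step (negbTE ND) /= mem_cat.
rewrite mem_filter vars_cat wv orbT /=; apply/orP; right.
apply/flattenP; exists (tvar (app (subst_m lam fr k m) (TV u))) => //.
by apply/mapP; exists u.
Qed.

Lemma fold_delta_out (l : seq (nat * mapping)) st w :
  w \in (foldl step st l).2 ->
  w \in st.2 \/ exists k m u, [/\ List.In (k, m) l, ~~ discarded m,
      u \in DeltaM m & w \in tvar (app (subst_m lam fr k m) (TV u))].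
Proof.
elim: l st => [|[k m] l IH] st /=; first by left.
move/IH => [|[k' [m' [u [H1 H2 H3 H4]]]]]; last first.
  by right; exists k', m', u; split => //; right.
rewrite /score_step; case: ifP => D; first by left.
rewrite /= mem_cat => /orP [->|]; first by left.
rewrite mem_filter => /andP [_ /flattenP [s /mapP [u uD ->] ws]].
by right; exists k, m, u; split => //; [left | rewrite D].
Qed.

End ScoreFold.

Definition numbered_sols lam SG A : seq (nat * mapping) :=
  zip (iota 0 (size (QA_sols lam SG A))) (QA_sols lam SG A).

Lemma scoreE lam fr SG SD A C :
  score lam fr (SG, SD) A C =
  foldl (score_step lam fr SG SD A C) (SG, SD) (numbered_sols lam SG A).
Proof. by []. Qed.

Lemma assign_map (f : nat -> term) vs v : v \in vs ->
  assign vs (map f vs) v = Some (f v).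
Proof. by move=> vV; rewrite /assign vV (nth_map 0) ?index_mem // nth_index. Qed.

Lemma QA_sols_inv lam SG A m : List.In m (QA_sols lam SG A) ->
  [/\ forall v, v \in vars A -> exists2 x, m v = Some x & x \in consts (sandbox lam SG),
      forall v, v \notin vars A -> m v = None & in_QA_sol lam SG A m].
Proof.
rewrite /QA_sols /candidates => /In_filter [/In_map [vals [/In_mem vI ->]] Q].
have [sz al] := allseqsP vI.
split => // v; rewrite /assign; last by move/negbTE ->.
move=> vA; rewrite vA; eexists; first by [].
by apply: (allP al); apply: mem_nth; rewrite sz index_mem.
Qed.

Lemma QA_sols_intro lam SG A (f : nat -> term) :
  (forall v, v \in vars A -> f v \in consts (sandbox lam SG)) ->
  in_QA_sol lam SG A (assign (vars A) (map f (vars A))) ->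
  List.In (assign (vars A) (map f (vars A))) (QA_sols lam SG A).
Proof.
move=> H Q; apply/In_filter; split => //; apply/In_map.
exists (map f (vars A)); split => //; apply/In_mem.
apply: allseqs_intro; first by rewrite size_map.
by apply/allP => x /mapP [v vA ->]; apply: H.
Qed.

Lemma values_const lam SG A m v : List.In m (QA_sols lam SG A) ->
  v \in vars A -> exists2 x, m v = Some x & is_const x.
Proof.
move=> /QA_sols_inv [Mv _ _] /Mv [x Ex]; rewrite mem_consts => /andP [cx _].
by exists x.
Qed.

Lemma in_Tset lam SG SD m tA tS :
  tS \in Tset lam SG SD m tA ->
  [/\ tS \in SG & exists2 tq, tq \in rewritings lam tA & models SD tS (app3 m tq)].
Proof.
rewrite mem_filter => /andP [/hasP [tq tqR /andP [_ /decPP M]] tSG].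
by split => //; exists tq.
Qed.

(* For a mapping of [[Q(A)]]_{S(S)}, T(t_A) is never empty: the sandbox triple
   matched by the rewriting of t_A comes from a pattern of S^G. *)
Lemma Tset_nonempty lam SG SD A m tA :
  uniq (var_occ SG) -> in_QA_sol lam SG A m -> tA \in A ->
  exists tS, tS \in Tset lam SG SD m tA.
Proof.
move=> U /hasP [q qQ /allP al] tAA.
have [tq tqq tqR] := QA_mem qQ tAA.
have := al _ tqq; rewrite sandboxE => /mapP [tS tSG E].
exists tS; rewrite mem_filter tSG andbT; apply/hasP; exists tq => //.
rewrite E sandboxE map_f //=; apply/decPP/models_lamsub.
exact: uniq_vars_in U tSG.
Qed.

Lemma sp_in_DeltaM {lam : nat} {SG : seq tp} {SD : seq nat} {A C : seq tp}
    {m : mapping} t v :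
  (tsub t = TV v \/ tpred t = TV v) -> t \in A ++ C ->
  v \in DeltaM lam SG SD A C m.
Proof.
move=> H.
have sp P : t \in P -> v \in sp_vars P.
  by move=> tP; rewrite mem_sp_vars; apply/hasP; exists t => //; case: H => ->;
    rewrite eqxx ?orbT.
by rewrite /DeltaM !mem_cat => /orP [/sp -> | /sp ->]; rewrite ?orbT.
Qed.

Lemma delta_b_in {lam : nat} {SG : seq tp} {SD : seq nat} {A C : seq tp}
    {m : mapping} tA v : tA \in A ->
  v \in delta_b lam SG SD m tA -> v \in DeltaM lam SG SD A C m.
Proof.
move=> tAA H; rewrite /DeltaM !mem_cat; apply/orP; right; apply/orP; right.
by apply/flatten_mapP; exists tA.
Qed.

Lemma DeltaM_vars {lam : nat} {SG : seq tp} {SD : seq nat} {A C : seq tp}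
    {m : mapping} u : {subset vars C <= vars A} ->
  u \in DeltaM lam SG SD A C m -> u \in vars A.
Proof.
move=> CA; rewrite /DeltaM !mem_cat => /or3P [/sp_vars_vars //|/sp_vars_vars/CA //|].
case/flatten_mapP => tA tAA; rewrite /delta_b.
case Eo: (tobj tA) => [n|n|n] //; case: ifP => // _; rewrite inE => /eqP ->.
by apply: tterms_vars tAA _; rewrite -Eo in_tterms_obj.
Qed.

Lemma subst_m_var lam fr SG SD A C j mj u w : {subset vars C <= vars A} ->
  List.In mj (QA_sols lam SG A) -> u \in DeltaM lam SG SD A C mj ->
  w \in tvar (app (subst_m lam fr j mj) (TV u)) ->
  mj u = Some (TU lam) /\ w = fr j u.
Proof.
move=> CA mQ uD; have [x Ex cx] := values_const mQ (DeltaM_vars CA uD).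
rewrite /= /subst_m Ex; case: eqP => [[->]|_] /=; first by rewrite inE => /eqP ->.
by case: x cx {Ex}.
Qed.

Lemma rewriting_entry lam (m m' : mapping) x tq :
  alt lam x tq ->
  (forall v, x = TV v -> exists2 y, m v = Some y & (y != TU lam -> m' v = Some y)) ->
  app m tq = TU lam \/ app m tq = app m' x.
Proof.
rewrite /alt => /orP [/eqP ->|/eqP ->]; last by left.
case: x => [n|n|n] H; try by right.
have [y E1 E2] := H n erefl; rewrite /= E1 /=.
by case: (eqVneq y (TU lam)) => [->|ne]; [left | right; rewrite (E2 ne)].
Qed.

Lemma pos_ok_concretise lam SD (y p val : term) :
  pos_inv SD y p -> y != TU lam -> (p = TU lam \/ p = val) -> is_const val ->
  (p = TU lam -> forall w, y = TV w -> w \in SD -> ~~ is_lit val) ->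
  pos_ok SD y val.
Proof.
move=> [H1 H2] yl Hp cv H3.
case: y H1 H2 yl H3 => [n|n|n] H1 H2 yl H3 /=; last first.
  rewrite cv /=; apply/implyP => nD; case: Hp => Hp; first exact: H3.
  by rewrite -Hp; apply: H2.
all: have E := H1 isT; case: Hp => Hp; last by rewrite E Hp.
all: by move: yl; rewrite E Hp eqxx.
Qed.

Definition mp (vs : seq nat) (f : nat -> term) : mapping :=
  fun v => if v \in vs then Some (f v) else None.

Section Concretisation.
Variables (lam : nat) (SG : seq tp) (SD : seq nat) (A C : seq tp).
Hypothesis SG_uniq : uniq (var_occ SG).
Hypotheses (A_pat : is_gpattern A) (C_pat : is_gpattern C).
Hypothesis CA : {subset vars C <= vars A}.
Hypothesis lam_fresh : TU lam \notin flatten (map tterms (SG ++ A ++ C)).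

Variables (m : mapping) (xv : nat -> term).
Hypothesis m_sol : List.In m (QA_sols lam SG A).
Hypothesis m_kept : ~~ discarded lam SG SD A C m.
Hypothesis xv_const : forall v, is_const (xv v).
Hypothesis xv_delta : forall v, m v = Some (TU lam) ->
  v \in DeltaM lam SG SD A C m -> ~~ is_lit (xv v).

Local Notation DeltaM := (DeltaM lam SG SD A C m).

Definition concr_val v := if m v == Some (TU lam) then xv v else odflt (TU 0) (m v).
Definition concr := mp (vars A) concr_val.

Lemma concrE v : v \in vars A -> app concr (TV v) = concr_val v.
Proof. by rewrite /= /concr /mp => ->. Qed.

Lemma concr_const v : v \in vars A -> is_const (concr_val v).
Proof.
move=> vA; rewrite /concr_val; case: ifP => _ //.
by have [x -> cx] := values_const m_sol vA.
Qed.

Lemma m_kept_delta v : v \in DeltaM -> ~~ (if m v is Some (TL _) then true else false).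
Proof.
by move: m_kept; rewrite /discarded negb_or => /andP [_ /hasPn H] /H.
Qed.

Lemma concr_uri v : v \in vars A -> v \in DeltaM -> is_uri (concr_val v).
Proof.
move=> vA vD; rewrite /concr_val; case: eqP => [E|NE].
  by have := xv_delta E vD; have := xv_const v; case: (xv v).
have [x Ex cx] := values_const m_sol vA; rewrite Ex /=.
by have := m_kept_delta vD; rewrite Ex; case: x cx {Ex NE}.
Qed.

Lemma concr_lit v : m v = Some (TU lam) -> is_lit (concr_val v) -> v \notin DeltaM.
Proof.
rewrite /concr_val => E; rewrite E eqxx => L; apply/negP => vD.
by have := xv_delta E vD; rewrite L.
Qed.

Lemma concr_agrees v : v \in vars A ->
  exists2 y, m v = Some y & (y != TU lam -> concr v = Some y).
Proof.
move=> vA; have [y Ey _] := values_const m_sol vA; exists y => // ne.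
rewrite /concr /mp vA /concr_val Ey; case: eqP => // [[E]].
by rewrite E eqxx in ne.
Qed.

Lemma concr_agrees_at x : (forall v, x = TV v -> v \in vars A) ->
  forall v, x = TV v -> exists2 y, m v = Some y & (y != TU lam -> concr v = Some y).
Proof. by move=> H v /H; exact: concr_agrees. Qed.

(* concr turns the patterns of the rule into triples: their subject and
   predicate variables are in Delta^m, hence concretised to URIs. *)
Lemma concr_triple t : t \in A ++ C -> is_triple (app3 concr t).
Proof.
move=> tAC; have vA v : TV v \in tterms t -> v \in vars A.
  move: tAC; rewrite mem_cat => /orP [tA|tC] vt; first exact: tterms_vars tA vt.
  by apply: CA; apply: tterms_vars tC vt.
have /andP [ps pp] : is_tpattern t.
  by move: tAC; rewrite mem_cat => /orP [] H; [apply: (allP A_pat) | apply: (allP C_pat)].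
have key x : x \in tterms t -> app concr x = if x is TV n then concr_val n else x.
  by case: x => // n /vA; exact: concrE.
change [&& is_uri (app concr (tsub t)), is_uri (app concr (tpred t))
  & is_const (app concr (tobj t))].
rewrite !key ?in_tterms_sub ?in_tterms_pred ?in_tterms_obj //; apply/and3P; split.
- case Es: (tsub t) ps => [n|n|n] //= _; apply: concr_uri.
    by apply: vA; rewrite -Es in_tterms_sub.
  by apply: (sp_in_DeltaM _ tAC); left.
- case Es: (tpred t) pp => [n|n|n] //= _; apply: concr_uri.
    by apply: vA; rewrite -Es in_tterms_pred.
  by apply: (sp_in_DeltaM _ tAC); right.
- case Es: (tobj t) => [n|n|n] //; apply: concr_const.
  by apply: vA; rewrite -Es in_tterms_obj.
Qed.

(* When t_A is concretised to a literal object l, some pattern of T(t_A) has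
   object l or a variable outside S^Delta: by step 2(a) if m(t_A[3]) = l, by
   step 2(b) and the concretisation if m(t_A[3]) = lambda. *)
Lemma Tset_witness tA : tA \in A ->
  exists2 tS, tS \in Tset lam SG SD m tA &
    (is_lit (app concr (tobj tA)) ->
       (tobj tS == app concr (tobj tA)) || nonDelta_var SD (tobj tS)).
Proof.
move=> tAA; have [_ _ Q] := QA_sols_inv m_sol.
have oA n : tobj tA = TV n -> n \in vars A.
  by move=> Eo; apply: (tterms_vars tAA); rewrite -Eo in_tterms_obj.
case: (boolP (is_lit (app concr (tobj tA)))) => L; last first.
  by have [tS H] := Tset_nonempty SD SG_uniq Q tAA; exists tS.
move: m_kept; rewrite /discarded negb_or => /andP [/hasPn /(_ tA tAA) ND _].
case: (boolP (is_lit (app m (tobj tA)))) => L2.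
- have E : app m (tobj tA) = app concr (tobj tA).
    case Eo: (tobj tA) L L2 => [n|n|n] //=.
    have [x Ex _] := values_const m_sol (oA n Eo).
    rewrite /concr /mp (oA n Eo) /concr_val Ex /=.
    by case: eqP => // [[->]].
  move: ND; rewrite /discard_a -E L2 /= negbK => /hasP [tS tST H].
  by exists tS; rewrite // -E.
- case Eo: (tobj tA) L L2 => [n|n|n] //; rewrite concrE ?oA // => L L2.
  have [x Ex _] := values_const m_sol (oA n Eo).
  have Ex' : m n = Some (TU lam).
    by move: L L2; rewrite /concr_val /= Ex; case: eqP => [-> //|_ ->].
  have nD := concr_lit Ex' L.
  case: (boolP (has (fun tS => nonDelta_var SD (tobj tS)) (Tset lam SG SD m tA))).
    by move=> /hasP [tS tST H]; exists tS => // _; rewrite H orbT.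
  move=> NH; case/negP: nD; apply: (delta_b_in tAA).
  by rewrite /delta_b Eo Ex' eqxx NH inE.
Qed.

Lemma concr_models tA : tA \in A ->
  exists2 tS, tS \in SG & models SD tS (app3 concr tA).
Proof.
move=> tAA; have [tS tST R] := Tset_witness tAA.
have [tSG [tq tqR M]] := in_Tset tST.
have [Ha Hb Hc] := rewritingsP tqR; have [Ia Ib Ic] := models_inv M.
have [fa fb fc] : [/\ tsub tS != TU lam, tpred tS != TU lam & tobj tS != TU lam].
  by apply/notin_tterms/(fresh_in lam_fresh); rewrite mem_cat tSG.
have /and3P [ca cb cc] : [&& is_uri (app concr (tsub tA)), is_uri (app concr (tpred tA))
    & is_const (app concr (tobj tA))].
  by apply: (concr_triple (t := tA)); rewrite mem_cat tAA.
have agree x : x \in tterms tA -> forall v, x = TV v ->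
    exists2 y, m v = Some y & (y != TU lam -> concr v = Some y).
  by move=> xt; apply: concr_agrees_at => v Ev; apply: (tterms_vars tAA); rewrite -Ev.
exists tS => //; apply: models_pos; first exact: uniq_vars_in SG_uniq tSG.
- apply: (pos_ok_concretise Ia fa (rewriting_entry Ha (agree _ (in_tterms_sub tA)))).
    exact: uri_const ca.
  by move=> _ w _ _; case: (app concr (tsub tA)) ca.
- apply: (pos_ok_concretise Ib fb (rewriting_entry Hb (agree _ (in_tterms_pred tA)))).
    exact: uri_const cb.
  by move=> _ w _ _; case: (app concr (tpred tA)) cb.
- apply: (pos_ok_concretise Ic fc (rewriting_entry Hc (agree _ (in_tterms_obj tA)))) => //.
  move=> _ w Ew wD; apply/negP => Lv; move: (R Lv); rewrite Ew /= wD orbF.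
  by case: (app concr (tobj tA)) Lv.
Qed.

Lemma concr_rule_app t : t \in Defs.appP concr C ->
  exists I, instance (SG, SD) I /\ in_rule_app A C I t.
Proof.
move=> tC; exists (Defs.appP concr A); split.
  split; last by move=> t0 /mapP [tA tAA ->]; exact: concr_models.
  by apply/allP => t0 /mapP [tA tAA ->]; apply: concr_triple; rewrite mem_cat tAA.
right; exists concr; split; [split; [|split] | split] => //.
- by move=> v d; rewrite /concr /mp; case: ifP => // vA [<-]; exact: concr_const.
- by move=> v; rewrite /concr /mp; case: ifP.
- by apply/allP => t0 /mapP [c cC ->]; apply: concr_triple; rewrite mem_cat cC orbT.
Qed.

End Concretisation.

Definition fresh_values (fr : nat -> nat -> nat) k (mu : mapping) (C : seq tp) v : term :=
  if v \in vars C then odflt (TU 0) (mu (fr k v)) else TU 0.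

Lemma subst_concr lam fr SG A C k m mu c : {subset vars C <= vars A} ->
  List.In m (QA_sols lam SG A) -> c \in C ->
  is_triple (app3 mu (app3 (subst_m lam fr k m) c)) ->
  app3 mu (app3 (subst_m lam fr k m) c) = app3 (concr lam A m (fresh_values fr k mu C)) c.
Proof.
move=> CA mQ cC /and3P [T1 T2 T3].
have entry x : x \in tterms c -> is_const (app mu (app (subst_m lam fr k m) x)) ->
    app mu (app (subst_m lam fr k m) x) = app (concr lam A m (fresh_values fr k mu C)) x.
  case: x => [n|n|n] // xt; have nC := tterms_vars cC xt; have nA := CA _ nC.
  rewrite /= /concr /mp nA /concr_val /subst_m /=; case: eqP => [_|_] /=.
    by rewrite /fresh_values nC; case: (mu (fr k n)).
  by have [y Ey cy] := values_const mQ nA; rewrite Ey /= app_const.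
rewrite /app3 /=; congr (_, _, _).
- by apply: entry; [exact: in_tterms_sub | exact: uri_const T1].
- by apply: entry; [exact: in_tterms_pred | exact: uri_const T2].
- by apply: entry; [exact: in_tterms_obj | exact: T3].
Qed.

Lemma added_pattern_sound lam fr SG SD A C k m c t :
  is_schema (SG, SD) -> is_rule A C ->
  TU lam \notin flatten (map tterms (SG ++ A ++ C)) ->
  List.In (k, m) (numbered_sols lam SG A) -> ~~ discarded lam SG SD A C m -> c \in C ->
  models (score lam fr (SG, SD) A C).2 (app3 (subst_m lam fr k m) c) t -> is_triple t ->
  exists I, instance (SG, SD) I /\ in_rule_app A C I t.
Proof.
move=> [_ [SGu _]] [Ap [Cp [CA _]]] Fr Hk ND cC [mu [muM [Et muD]]] Tt.
have mQ := zip_iota_in Hk.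
have xv_const v : is_const (fresh_values fr k mu C v).
  rewrite /fresh_values; case: ifP => // _.
  by case E: (mu _) => [d|] //=; exact: muM E.
(* a fresh copy of a Delta^m variable occurring in C is in the final S'^Delta *)
have xv_delta v : m v = Some (TU lam) -> v \in DeltaM lam SG SD A C m ->
    ~~ is_lit (fresh_values fr k mu C v).
  move=> E vD; rewrite /fresh_values; case: ifP => vC //.
  case Em: (mu (fr k v)) => [d|] //=; apply: muD Em.
  rewrite scoreE; apply: (fold_delta_in _ Hk ND vD); first by rewrite /= /subst_m E eqxx inE.
  move/mem_varsP: vC => [c' c'C vc']; apply: (tterms_vars (map_f _ c'C)).
  by have := tterms_app3 (subst_m lam fr k m) vc'; rewrite /= /subst_m E eqxx.
apply: (concr_rule_app SGu Ap Cp CA Fr mQ ND xv_const xv_delta).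
by rewrite -Et (subst_concr CA mQ cC) ?Et //; apply: map_f.
Qed.

(* Reading back, through the fresh copies fr k v (v in vs), a mapping m0. *)
Definition unfresh (fr : nat -> nat -> nat) k (vs : seq nat) (m0 : mapping) : mapping :=
  fun w => let p v := fr k v == w in
    if has p vs then m0 (nth 0 vs (find p vs)) else None.

Lemma unfresh_fr fr k vs m0 v : injective (fr k) -> v \in vs ->
  unfresh fr k vs m0 (fr k v) = m0 v.
Proof.
move=> frI vV; have H : has (fun u => fr k u == fr k v) vs by apply/hasP; exists v.
by rewrite /unfresh H; have /eqP/frI -> := nth_find 0 H.
Qed.

Lemma unfresh_inv fr k vs m0 w d : unfresh fr k vs m0 w = Some d ->
  exists2 v, v \in vs & w = fr k v /\ m0 v = Some d.
Proof.
rewrite /unfresh; case: ifP => // H E; exists (nth 0 vs (find (fun v => fr k v == w) vs)).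
  by apply: mem_nth; rewrite -has_find.
by split => //; have /eqP := nth_find 0 H.
Qed.

Section Abstraction.
Variables (lam : nat) (SG : seq tp) (SD : seq nat) (A C : seq tp).
Hypothesis SG_uniq : uniq (var_occ SG).
Hypothesis CA : {subset vars C <= vars A}.
Hypothesis lam_fresh : TU lam \notin flatten (map tterms (SG ++ A ++ C)).

Variables (I : seq tp) (m0 : mapping).
Hypothesis I_inst : instance (SG, SD) I.
Hypothesis m0_sol : sol A I m0.
Hypothesis m0_C : is_graph (Defs.appP m0 C).

Definition chosen (tA : tp) : tp :=
  epsilon (inhabits (TU 0, TU 0, TU 0))
    (fun tS => tS \in SG /\ models SD tS (app3 m0 tA)).

Lemma chosenP tA : tA \in A -> chosen tA \in SG /\ models SD (chosen tA) (app3 m0 tA).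
Proof.
move=> tAA; apply: (epsilon_spec (inhabits (TU 0, TU 0, TU 0))
  (fun tS => tS \in SG /\ models SD tS (app3 m0 tA))).
have [_ [_ m0I]] := m0_sol.
by have [tS tSG M] := I_inst.2 _ (m0I _ (map_f _ tAA)); exists tS.
Qed.

Lemma chosen_fresh tA : tA \in A -> TU lam \notin tterms (chosen tA).
Proof. by move=> /chosenP [tSG _]; apply: (fresh_in lam_fresh); rewrite mem_cat tSG. Qed.

Lemma m0_const v : v \in vars A -> exists2 d, m0 v = Some d & is_const d.
Proof.
have [m0M [m0D _]] := m0_sol.
move=> vA; move: (m0D v); rewrite vA; case E: (m0 v) => [d|] // _.
by exists d => //; apply: m0M E.
Qed.

(* The value of v under m0 (dummy outside vars(A)). *)
Definition val0 v := odflt (TU 0) (m0 v).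

(* The variable v of A is "fixed" when, at some occurrence in some t_A, the
   chosen pattern has a constant: m0(v) is then visible in the sandbox. *)
Definition fixed v : bool :=
  has (fun tA => [|| (tsub tA == TV v) && ~~ is_var (tsub (chosen tA)),
                     (tpred tA == TV v) && ~~ is_var (tpred (chosen tA)) |
                     (tobj tA == TV v) && ~~ is_var (tobj (chosen tA))]) A.

Definition abs_val v := if fixed v then val0 v else TU lam.
Definition abs : mapping := assign (vars A) (map abs_val (vars A)).

Lemma absE v : v \in vars A -> abs v = Some (abs_val v).
Proof. exact: assign_map. Qed.

Lemma chosen_const x y v : pos_inv SD y (app m0 x) -> x = TV v -> v \in vars A ->
  ~~ is_var y -> y = val0 v.
Proof.
move=> [H1 _] Ex vA ny; have := H1 ny; rewrite Ex /=.
by have [d Ed _] := m0_const vA; rewrite /val0 Ed.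
Qed.

Lemma fixed_val0 v : v \in vars A -> fixed v ->
  exists2 tA, tA \in A & val0 v \in tterms (chosen tA) /\ ~~ is_var (val0 v).
Proof.
move=> vA /hasP [tA tAA]; have [Ia Ib Ic] := models_inv (chosenP tAA).2.
case/or3P => /andP [/eqP Ex ny]; exists tA => //.
- by rewrite -(chosen_const Ia Ex vA ny) in_tterms_sub.
- by rewrite -(chosen_const Ib Ex vA ny) in_tterms_pred.
- by rewrite -(chosen_const Ic Ex vA ny) in_tterms_obj.
Qed.

Lemma fixed_not_lam v : v \in vars A -> fixed v -> val0 v != TU lam.
Proof.
move=> vA /(fixed_val0 vA) [tA tAA [yT _]].
by apply: contraNneq (chosen_fresh tAA) => <-.
Qed.

Lemma abs_entry x y : (forall v, x = TV v -> v \in vars A) ->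
  pos_inv SD y (app m0 x) -> (forall v, x = TV v -> ~~ is_var y -> fixed v) ->
  app abs (if is_var y then TU lam else x) = lamsub lam y.
Proof.
move=> xA Hi Fx; case: (boolP (is_var y)) => ny; first by case: y ny {Hi Fx}.
case Ex: x xA Hi Fx => [n|n|n] xA Hi Fx; try by have [E _] := Hi; rewrite (E ny).
have nA := xA n erefl; rewrite /= absE // /abs_val (Fx n erefl ny).
by rewrite -(chosen_const Hi erefl nA ny); case: y ny {Hi Fx}.
Qed.

Definition abs_rewriting (tA : tp) : tp :=
  (if is_var (tsub (chosen tA)) then TU lam else tsub tA,
   if is_var (tpred (chosen tA)) then TU lam else tpred tA,
   if is_var (tobj (chosen tA)) then TU lam else tobj tA).

Lemma abs_rewriting_mem tA : abs_rewriting tA \in rewritings lam tA.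
Proof. by apply: rewritings_intro; rewrite /alt; case: ifP; rewrite eqxx ?orbT. Qed.

Lemma abs_rewriting_sandbox tA : tA \in A ->
  app3 abs (abs_rewriting tA) = lamsub3 lam (chosen tA).
Proof.
move=> tAA; have [Ia Ib Ic] := models_inv (chosenP tAA).2.
have vA x : x \in tterms tA -> forall v, x = TV v -> v \in vars A.
  by move=> xt v Ev; apply: (tterms_vars tAA); rewrite -Ev.
rewrite /app3 /lamsub3 /=; congr (_, _, _); apply: abs_entry => //.
- exact: vA (in_tterms_sub tA).
- by move=> v Ev ny; apply/hasP; exists tA => //; rewrite Ev eqxx ny.
- exact: vA (in_tterms_pred tA).
- by move=> v Ev ny; apply/hasP; exists tA => //; rewrite Ev eqxx ny orbT.
- exact: vA (in_tterms_obj tA).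
- by move=> v Ev ny; apply/hasP; exists tA => //; rewrite Ev eqxx ny !orbT.
Qed.

Lemma chosen_in_Tset tA : tA \in A -> chosen tA \in Tset lam SG SD abs tA.
Proof.
move=> tAA; have [chS _] := chosenP tAA.
rewrite mem_filter chS andbT; apply/hasP; exists (abs_rewriting tA).
  exact: abs_rewriting_mem.
rewrite abs_rewriting_sandbox // sandboxE map_f //=.
by apply/decPP/models_lamsub; exact: uniq_vars_in SG_uniq chS.
Qed.

Lemma abs_in_QA : in_QA_sol lam SG A abs.
Proof.
apply/hasP; exists (map abs_rewriting A).
  by apply: QA_intro => tA _; exact: abs_rewriting_mem.
apply/allP => t0 /mapP [tA tAA ->]; rewrite abs_rewriting_sandbox // sandboxE map_f //.
by have [] := chosenP tAA.
Qed.

Lemma lamsub_tterms y t : y \in tterms t -> lamsub lam y \in tterms (lamsub3 lam t).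
Proof. by rewrite !inE => /or3P [] /eqP ->; rewrite eqxx ?orbT. Qed.

Lemma chosen_sandbox_const tA y : tA \in A -> y \in tterms (chosen tA) ->
  lamsub lam y \in consts (sandbox lam SG).
Proof.
move=> tAA yT; have [chS _] := chosenP tAA; rewrite mem_consts.
apply/andP; split; first by case: y {yT}.
apply/flatten_mapP; exists (lamsub3 lam (chosen tA)); last exact: lamsub_tterms.
by rewrite sandboxE map_f.
Qed.

Lemma abs_val_consts v : v \in vars A -> abs_val v \in consts (sandbox lam SG).
Proof.
move=> vA; rewrite /abs_val; case: ifP => Fv.
  have [tA tAA [yT ny]] := fixed_val0 vA Fv.
  by have := chosen_sandbox_const tAA yT; case: (val0 v) ny.
have [tA tAA vT] := mem_varsP _ _ vA; have SB := chosen_sandbox_const tAA.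
move: vT; rewrite !inE => /or3P [] /eqP Ex.
- case Ey: (tsub (chosen tA)) (SB _ (in_tterms_sub _)) => [n|n|n] //;
    by case/negP: Fv; apply/hasP; exists tA => //; rewrite -Ex eqxx Ey.
- case Ey: (tpred (chosen tA)) (SB _ (in_tterms_pred _)) => [n|n|n] //;
    by case/negP: Fv; apply/hasP; exists tA => //; rewrite -Ex eqxx Ey orbT.
- case Ey: (tobj (chosen tA)) (SB _ (in_tterms_obj _)) => [n|n|n] //;
    by case/negP: Fv; apply/hasP; exists tA => //; rewrite -Ex eqxx Ey !orbT.
Qed.

Lemma abs_sol : List.In abs (QA_sols lam SG A).
Proof. exact: QA_sols_intro abs_val_consts abs_in_QA. Qed.

Lemma abs_lit v n : v \in vars A -> abs v = Some (TL n) -> m0 v = Some (TL n).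
Proof.
move=> vA; rewrite absE // /abs_val; case: ifP => // _ [E].
by have [d Ed _] := m0_const vA; rewrite /val0 Ed /= in E; rewrite Ed E.
Qed.

(* m0 sends no variable of Delta^abs to a literal: subject and predicate
   variables because m0(A) and m0(C) are graphs, variables added by step 2(b)
   because the chosen pattern then has a no-literal variable there. *)
Lemma delta_abs_nonlit v d : v \in DeltaM lam SG SD A C abs -> m0 v = Some d -> ~~ is_lit d.
Proof.
have [_ [_ m0I]] := m0_sol; have [I_graph _] := I_inst.
move=> + Ed; rewrite /DeltaM !mem_cat => /or3P [].
- rewrite mem_sp_vars => /hasP [tA tAA H].
  have /and3P [U1 U2 _] := allP I_graph _ (m0I _ (map_f (app3 m0) tAA)).
  by case/orP: H U1 U2 => /eqP Ev; rewrite /app3 /= ?Ev /= Ed; case: d {Ed}.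
- rewrite mem_sp_vars => /hasP [c cC H].
  have /and3P [U1 U2 _] := allP m0_C _ (map_f (app3 m0) cC).
  by case/orP: H U1 U2 => /eqP Ev; rewrite /app3 /= ?Ev /= Ed; case: d {Ed}.
case/flatten_mapP => tA tAA; rewrite /delta_b.
case Eo: (tobj tA) => [n|n|n] //; case: ifP => // /andP [/eqP Eu /hasPn NH].
rewrite inE => /eqP En; subst n.
have vA : v \in vars A by apply: (tterms_vars tAA); rewrite -Eo in_tterms_obj.
have NF : ~~ fixed v.
  apply/negP => F; move: Eu; rewrite absE // /abs_val F => -[E].
  by move: (fixed_not_lam vA F); rewrite E eqxx.
have := NH _ (chosen_in_Tset tAA); have [_ _ [Ic1 Ic2]] := models_inv (chosenP tAA).2.
case Ey: (tobj (chosen tA)) Ic1 Ic2 => [p|p|p] Ic1 Ic2.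
- by case/negP: NF; apply/hasP; exists tA => //; rewrite Eo Ey eqxx !orbT.
- by case/negP: NF; apply/hasP; exists tA => //; rewrite Eo Ey eqxx !orbT.
- by rewrite /= negbK => pD; have := Ic2 p erefl pD; rewrite /app3 /= Eo /= Ed.
Qed.

Lemma abs_kept : ~~ discarded lam SG SD A C abs.
Proof.
rewrite /discarded negb_or; apply/andP; split.
- apply/hasPn => tA tAA; rewrite /discard_a /=; apply/negP => /andP [L /hasPn NH].
  have := NH _ (chosen_in_Tset tAA); have [_ _ [Ic1 Ic2]] := models_inv (chosenP tAA).2.
  have EL : app abs (tobj tA) = app m0 (tobj tA).
    case Eo: (tobj tA) L => [n|n|n] //=.
    have nA : n \in vars A by apply: (tterms_vars tAA); rewrite -Eo in_tterms_obj.
    by case Emn: (abs n) => [[p|p|p]|] //= _; rewrite (abs_lit nA Emn).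
  rewrite EL in L *.
  case Ey: (tobj (chosen tA)) Ic1 Ic2 => [n|n|n] Ic1 Ic2 /=; rewrite ?(Ic1 isT) ?eqxx //.
  case: (boolP (n \in SD)) => nD /=; last by rewrite orbT.
  by rewrite (negbTE (Ic2 n erefl nD)) in L.
- apply/hasPn => v vD; case Ev: (abs v) => [[n|n|n]|] //; apply/negP => _.
  have vA := DeltaM_vars CA vD.
  by have := delta_abs_nonlit vD (abs_lit vA Ev).
Qed.

Variable fr : nat -> nat -> nat.
Hypothesis fr_inj : forall k v k' v', fr k v = fr k' v' -> k = k' /\ v = v'.
Hypothesis fr_fresh : forall k v, fr k v \notin vars (SG ++ A ++ C).
Hypothesis SD_vars : {subset SD <= vars SG}.

Lemma subst_abs k c x : c \in C -> x \in tterms c ->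
  app (unfresh fr k (vars A) m0) (app (subst_m lam fr k abs) x) = app m0 x.
Proof.
case: x => // v cC xT; have vA : v \in vars A by apply: CA; exact: tterms_vars cC xT.
have frI : injective (fr k) by move=> u u' /fr_inj [].
rewrite /= /subst_m absE //; have [d Ed cd] := m0_const vA.
case: eqP => [_|NE] /=; first by rewrite unfresh_fr // Ed.
have Fv : fixed v by move: NE; rewrite /abs_val; case: (fixed v).
by rewrite /abs_val Fv /val0 Ed /= app_const.
Qed.

Lemma added_pattern_complete c : c \in C ->
  exists2 tS, tS \in (score lam fr (SG, SD) A C).1 &
              models (score lam fr (SG, SD) A C).2 tS (app3 m0 c).
Proof.
move=> cC; have [k Hk] := zip_iota_ex 0 abs_sol.
pose mu := unfresh fr k (vars A) m0.
exists (app3 (subst_m lam fr k abs) c).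
  rewrite scoreE; apply/fold_patterns; right; exists k, abs; split => //.
  - exact: abs_kept.
  - exact: map_f.
exists mu; split; [|split].
- by have [m0M _] := m0_sol; move=> w d /unfresh_inv [v _ [_ /m0M]].
- rewrite /app3; congr (_, _, _); apply: subst_abs cC _.
  + exact: in_tterms_sub.
  + exact: in_tterms_pred.
  + exact: in_tterms_obj.
- move=> w d wD /unfresh_inv [v vA [Ew Ed]]; subst w.
  move: wD; rewrite scoreE => /fold_delta_out [/SD_vars vS|[j [mj [u [Hj _ uD Ht]]]]].
    by move: (fr_fresh k v); rewrite vars_cat vS.
  have [_ Ew] := subst_m_var CA (zip_iota_in Hj) uD Ht.
  have [Ekj Evu] := fr_inj Ew; subst j u.
  have Emm := zip_iota_inj Hk Hj; subst mj.
  exact: delta_abs_nonlit uD Ed.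
Qed.

End Abstraction.

Lemma instance_cat S I1 I2 : instance S I1 -> instance S I2 -> instance S (I1 ++ I2).
Proof.
move=> [g1 m1] [g2 m2]; split; first by rewrite /is_graph all_cat; apply/andP.
by move=> t; rewrite mem_cat => /orP [/m1|/m2].
Qed.

Lemma in_rule_app_mono A C I J t : {subset I <= J} ->
  in_rule_app A C I t -> in_rule_app A C J t.
Proof.
move=> IJ [tI|[m [[mM [mD mI]] H]]]; first by left; apply: IJ.
by right; exists m; split => //; split => //; split => // x /mI /IJ.
Qed.

(* Instances of S are closed under union, so a finite graph each of whose
   triples lies in r(I_t) for some instance I_t lies in r(I) for one I. *)
Lemma instance_gather S A C (I' : seq tp) :
  (forall t, t \in I' -> exists I, instance S I /\ in_rule_app A C I t) ->
  exists I, instance S I /\ (forall t, t \in I' -> in_rule_app A C I t).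
Proof.
elim: I' => [_|t I' IH H]; first by exists [::]; split => //; split.
have [I1 [H1 R1]] := IH (fun x xI => H x (mem_behead (s := t :: I') xI)).
have [I2 [H2 R2]] := H t (mem_head _ _).
exists (I2 ++ I1); split; first exact: instance_cat.
move=> t0; rewrite inE => /orP [/eqP ->|t0I].
  by apply: (in_rule_app_mono _ R2) => x xI; rewrite mem_cat xI.
by apply: (in_rule_app_mono _ (R1 _ t0I)) => x xI; rewrite mem_cat xI orbT.
Qed.

Lemma score_sound SG SD A C lam fr I' :
  is_schema (SG, SD) -> is_rule A C ->
  TU lam \notin flatten (map tterms (SG ++ A ++ C)) ->
  instance (score lam fr (SG, SD) A C) I' ->
  exists I, instance (SG, SD) I /\ (forall t, t \in I' -> in_rule_app A C I t).
Proof.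
move=> HS HR Fr [I'g I'm]; apply: instance_gather => t tI.
have Tt := allP I'g _ tI; have [tS tSS M] := I'm _ tI.
move: tSS; rewrite scoreE => /fold_patterns [tSG|[k [m [Hk ND /mapP [c cC Ec]]]]].
  exists [:: t]; split; last by left; rewrite inE.
  split=> [|t0]; first by rewrite /is_graph /= Tt.
  rewrite inE => /eqP ->; exists tS => //.
  by apply: (models_restrict M) => w wD _; rewrite scoreE; apply: fold_delta_mono.
by subst tS; exact: added_pattern_sound HS HR Fr Hk ND cC M Tt.
Qed.

Lemma score_complete SG SD A C lam fr I I' :
  is_schema (SG, SD) -> is_rule A C ->
  TU lam \notin flatten (map tterms (SG ++ A ++ C)) ->
  (forall k v k' v', fr k v = fr k' v' -> k = k' /\ v = v') ->
  (forall k v, fr k v \notin vars (SG ++ A ++ C)) ->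
  instance (SG, SD) I -> (forall t, t \in I' -> in_rule_app A C I t) ->
  instance (score lam fr (SG, SD) A C) I'.
Proof.
move=> [_ [SGu [SDv _]]] [_ [_ [CA _]]] Fr frI frF [Ig Im] IR; split.
  apply/allP => t tI; case: (IR t tI) => [/(allP Ig) //|[m0 [_ [G tC]]]].
  exact: (allP G).
move=> t tI; case: (IR t tI) => [tII|[m0 [Sol [G /mapP [c cC ->]]]]].
  have [tS tSG M] := Im _ tII; exists tS; first by rewrite scoreE; apply/fold_patterns; left.
  apply: (models_restrict M) => w; rewrite scoreE => /fold_delta_out [//|].
  move=> [j [mj [u [Hj _ uD Ht]]]] wT.
  have [_ Ew] := subst_m_var CA (zip_iota_in Hj) uD Ht.
  by move: (frF j u); rewrite -Ew vars_cat (tterms_vars tSG wT).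
exact: (added_pattern_complete SGu CA Fr (conj Ig Im) Sol G frI frF SDv cC).
Qed.

Theorem theorem2 (S : schema) (A C : seq tp) (lam : nat) (fr : nat -> nat -> nat) :
  is_schema S -> is_rule A C ->
  (* λ is a fresh URI not occurring in S^G, A or C *)
  TU lam \notin flatten (map tterms (S.1 ++ A ++ C)) ->
  (* the variables ?v* are fresh: new for each mapping and not used elsewhere *)
  (forall k v k' v', fr k v = fr k' v' -> k = k' /\ v = v') ->
  (forall k v, fr k v \notin vars (S.1 ++ A ++ C)) ->
  forall I' : seq tp,
    instance (score lam fr S A C) I' <->
    exists I : seq tp, instance S I /\ (forall t, t \in I' -> in_rule_app A C I t).
Proof.
case: S => SG SD HS HR Fr frI frF I'; split; first exact: score_sound.
by move=> [I [HI IR]]; exact: score_complete HI IR.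
Qed.
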